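(* Let $k \geq 3$ and $n > 3k+1$ be integers such that $n$ is $k$-admissible, let $(V,\mathcal{A})$ be a non-reducible partial $k$-star design of order $n$ with at most $u(n,k)$ stars, and let $L$ be the leftover of $(V,\mathcal{A})$. Then (i) at most one vertex of $L$ has degree at most $k$; (ii) if two adjacent vertices of $L$ have degree less than $2k$, then every other vertex of $L$ has degree at least $2k$.
   Context: A $k$-star is a copy of $K_{1,k}$; its vertex of degree $k$ is the centre and the others are leaves. A partial $k$-star design of order $n$ is a pair $(V,\mathcal{A})$ where $V$ is a set of $n$ vertices and $\mathcal{A}$ is a set of edge-disjoint $k$-stars that are subgraphs of the complete graph $K_V$. The leftover of $(V,\mathcal{A})$ is the graph on $V$ whose edges are the edges of $K_V$ lying in no star of $\mathcal{A}$. A positive integer $n$ is $k$-admissible if $\binom{n}{2}\equiv 0 \pmod{k}$. Here \[u(n,k)= \begin{cases} 2 \lfloor \frac{n-2}{k} \rfloor-1 & \text{if $n \not \equiv 1\pmod{k}$},\\ \frac{2(n-1)}{k} - 2 & \text{if $n \equiv 1\pmod{k}$.} \end{cases} \] A partial $k$-star design $(V,\mathcal{A})$ of order $n$ is reducible if $n \equiv 1 \pmod{k}$, $|\mathcal{A}|=u(n,k)$, and there is a vertex which is the centre of at least one star in $\mathcal{A}$ and is not a leaf of any star in $\mathcal{A}$; otherwise it is non-reducible. *)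

From mathcomp Require Import all_boot.
Set Implicit Arguments. Unset Strict Implicit. Unset Printing Implicit Defensive.

(* Vertices: a finite type T (the vertex set V, with n = #|T|).
   Edges of K_V: 2-element subsets {x,y} of T, represented as [set x; y], x != y.
   A k-star is given by a pair (c, S): centre c, leaf set S with #|S| = k, c \notin S.
   For k >= 2 this pair is determined by the star (as a subgraph). *)

Definition star_edges (T : finType) (s : T * {set T}) : {set {set T}} :=
  [set [set s.1; x] | x in s.2].

Definition is_kstar (T : finType) (k : nat) (s : T * {set T}) : Prop :=
  s.1 \notin s.2 /\ #|s.2| = k.

Definition partial_star_design (T : finType) (k : nat) (A : {set T * {set T}}) : Prop :=
  (forall s, s \in A -> is_kstar k s) /\
  (forall s t, s \in A -> t \in A -> s != t ->
     [disjoint star_edges s & star_edges t]).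

Definition covered (T : finType) (A : {set T * {set T}}) (x y : T) : bool :=
  [exists s in A, [set x; y] \in star_edges s].

Definition leftover_adj (T : finType) (A : {set T * {set T}}) (x y : T) : bool :=
  (x != y) && ~~ covered A x y.

Definition leftover_deg (T : finType) (A : {set T * {set T}}) (x : T) : nat :=
  #|[set y | leftover_adj A x y]|.

Definition k_admissible (n k : nat) : Prop := 'C(n, 2) %% k = 0.

Definition u_bound (n k : nat) : nat :=
  if n %% k == 1 %% k then (2 * (n - 1)) %/ k - 2
  else 2 * ((n - 2) %/ k) - 1.

Definition reducible (T : finType) (k : nat) (A : {set T * {set T}}) : Prop :=
  #|T| %% k = 1 %% k /\ #|A| = u_bound #|T| k /\
  exists v : T, (exists2 s, s \in A & s.1 = v) /\
                (forall s, s \in A -> v \notin s.2).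

From mathcomp Require Import all_boot zify.
Set Implicit Arguments. Unset Strict Implicit. Unset Printing Implicit Defensive.

(* Every vertex other than v is a leftover neighbour of v, a leaf of one of the
   c(v) stars centred at v, or the centre of one of the l(v) stars having v as a
   leaf; hence n <= 1 + deg_L(v) + k c(v) + l(v).  For two vertices of leftover
   degree at most k (or three of degree below 2k, two of them adjacent in L) this
   forces their centre counts to be large, while these centre counts together
   with the number t of stars centred elsewhere add up to at most |A| <= u(n,k).
   A star centred elsewhere uses up one star of the budget but covers at most
   one edge at each vertex considered, whereas a star centred there covers k,
   and at most one star covers a given edge; so the budget u(n,k) is exceeded,
   except when n = 1 (mod k), |A| = u(n,k), t = 0 and one of the two vertices
   is a centre but no leaf: then the design is reducible. *)

Lemma set2_eq (T : finType) (a b c d : T) :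
  [set a; b] = [set c; d] -> (a = c /\ b = d) \/ (a = d /\ b = c).
Proof.
move=> ab_cd.
have : a \in [set c; d] by rewrite -ab_cd set21.
have : b \in [set c; d] by rewrite -ab_cd set22.
have : c \in [set a; b] by rewrite ab_cd set21.
have : d \in [set a; b] by rewrite ab_cd set22.
rewrite !inE => /orP[]/eqP e1 /orP[]/eqP e2 /orP[]/eqP e3 /orP[]/eqP e4;
  by subst; auto.
Qed.

Lemma card_bigcup_le (I T : finType) (P : {pred I}) (F : I -> {set T}) :
  #|\bigcup_(i in P) F i| <= \sum_(i in P) #|F i|.
Proof.
elim/big_rec2: _ => [|i n U _ le_Un]; first by rewrite cards0.
by rewrite (leq_trans (leq_card_setU (F i) U).1) ?leq_add2l.
Qed.

Lemma sum_set2 (T : finType) (F : T -> nat) x y : x != y ->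
  \sum_(c in [set x; y]) F c = F x + F y.
Proof. by move=> xy; rewrite big_setU1 ?big_set1 // inE. Qed.

Lemma sum_set3 (T : finType) (F : T -> nat) x y z : x != y -> x != z -> y != z ->
  \sum_(c in [set x; y; z]) F c = F x + F y + F z.
Proof.
move=> xy xz yz; rewrite -setUA big_setU1 /= ?sum_set2 ?addnA //.
by rewrite !inE negb_or xy xz.
Qed.

Lemma leq_mul2l_addr (k m c r : nat) : r < k -> k * m <= k * c + r -> m <= c.
Proof.
move=> r_lt_k le_km.
by rewrite -ltnS -(ltn_pmul2l (leq_ltn_trans (leq0n r) r_lt_k)) mulnS; lia.
Qed.

Lemma admissible_modn_neq2 (n k : nat) : 2 < k -> k_admissible n k -> n %% k != 2.
Proof.
move=> k_gt2 adm; apply/eqP => n_mod.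
have k_dvd : k %| n * n.-1.
  by rewrite -[n.-1]bin1 mul_bin_diag dvdn_mull //; apply/eqP.
have [q n_eq] : exists q, n = k * q + 2.
  by exists (n %/ k); rewrite {1}(divn_eq n k) n_mod mulnC.
have : n * n.-1 = k * (q * (k * q + 3)) + 2 by rewrite n_eq; nia.
move=> prod_eq; rewrite prod_eq dvdn_addr ?dvdn_mulr // in k_dvd.
by have := dvdn_leq (isT : 0 < 2) k_dvd; lia.
Qed.

Lemma u_bound_cases (n k : nat) : 2 < k -> 1 < n -> k_admissible n k ->
  (exists M, [/\ n = k * M + 1, n %% k = 1 %% k & u_bound n k = 2 * M - 2]) \/
  (exists q s, [/\ n = k * q + s + 2, 0 < s, s + 2 <= k & u_bound n k = 2 * q - 1]).
Proof.
move=> k_gt2 n_gt1 adm; rewrite /u_bound.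
have one_mod : 1 %% k = 1 by rewrite modn_small // ltnW.
case: eqP => [n_mod | n_mod]; [left | right].
- have [q n_eq] : exists q, n = k * q + 1.
    by exists (n %/ k); rewrite {1}(divn_eq n k) n_mod one_mod mulnC.
  exists q; split; rewrite ?n_mod ?one_mod //.
  by rewrite n_eq addnK mulnCA mulnC mulnK //; lia.
- have s_lt_k := ltn_pmod (n - 2) (ltnW (ltnW k_gt2)).
  have n2_eq := divn_eq (n - 2) k.
  move: ((n - 2) %/ k) ((n - 2) %% k) n2_eq s_lt_k => q s n2_eq s_lt_k.
  have n_eq : n = k * q + s + 2 by rewrite mulnC; lia.
  exists q, s; split => //.
  + rewrite lt0n; apply/negP => /eqP s0.
    have := admissible_modn_neq2 k_gt2 adm.
    by rewrite n_eq s0 addn0 mulnC modnMDl modn_small.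
  + rewrite leqNgt; apply/negP => s_big; apply: n_mod.
    have -> : n = q.+1 * k + 1 by rewrite mulSn; lia.
    by rewrite modnMDl.
Qed.

(* [c], [l], [d]: the numbers of stars centred at, and with a leaf at, a vertex
   and its leftover degree; [t]: the stars centred at none of the vertices
   considered; [a], [b], [a'], [b']: the stars through the edges between them. *)
Lemma count_two_low_vertices (k n N cv cw lv lw dv dw a b t : nat) :
  2 < k -> 3 * k + 1 < n -> k_admissible n k -> N <= u_bound n k ->
  n <= 1 + dv + (k * cv + lv) -> dv <= k ->
  n <= 1 + dw + (k * cw + lw) -> dw <= k ->
  lv <= a + t -> lw <= b + t -> a + b <= 1 -> cv + cw + t <= N ->
  [/\ n %% k = 1 %% k, N = u_bound n k, t = 0, 0 < cv & 0 < cw].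
Proof.
move=> k_gt2 n_big adm N_le v_cover dv_le w_cover dw_le lv_le lw_le ab_le c_le.
have k_gt0 : 0 < k by lia.
have n_gt1 : 1 < n by lia.
have kc_le : k * cv + k * cw + k * t <= k * N by rewrite -!mulnDr leq_mul2l c_le orbT.
have kt_ge : 3 * t <= k * t by rewrite leq_mul2r k_gt2 orbT.
have [[M [n_eq n_mod u_eq]] | [q [s [n_eq s_gt0 s_le u_eq]]]] :=
  u_bound_cases k_gt2 n_gt1 adm; rewrite u_eq in N_le *.
- have M_gt3 : 3 < M by rewrite -(ltn_pmul2l k_gt0); lia.
  have kN_le : k * N <= k * (2 * M - 2) by rewrite leq_mul2l N_le orbT.
  rewrite mulnBr mulnCA in kN_le.
  have t_le1 : t <= 1 by lia.
  have cv_ge : M - 1 <= cv by apply: (@leq_mul2l_addr k _ _ lv); rewrite ?mulnBr; lia.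
  have cw_ge : M - 1 <= cw by apply: (@leq_mul2l_addr k _ _ lw); rewrite ?mulnBr; lia.
  by split => //; lia.
- have q_gt2 : 2 < q by rewrite -(ltn_pmul2l k_gt0); lia.
  have kN_le : k * N <= k * (2 * q - 1) by rewrite leq_mul2l N_le orbT.
  rewrite mulnBr mulnCA in kN_le.
  exfalso; case: t => [|e] in lv_le lw_le c_le kc_le kt_ge *.
  + have cv_ge : q <= cv by apply: (@leq_mul2l_addr k _ _ (k - s)); lia.
    have cw_ge : q <= cw by apply: (@leq_mul2l_addr k _ _ (k - s)); lia.
    lia.
  + have ke_ge : 3 * e <= k * e by rewrite leq_mul2r k_gt2 orbT.
    rewrite mulnS in kc_le; lia.
Qed.

Lemma count_three_low_vertices (k n N cx cy cz lx ly lz dx dy dz a b a' b' t : nat) :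
  2 < k -> 3 * k + 1 < n -> k_admissible n k -> N <= u_bound n k ->
  n <= 1 + dx + (k * cx + lx) -> dx < 2 * k ->
  n <= 1 + dy + (k * cy + ly) -> dy < 2 * k ->
  n <= 1 + dz + (k * cz + lz) -> dz < 2 * k ->
  lx <= a + t -> ly <= b + t -> lz <= a' + b' + t -> a + a' <= 1 -> b + b' <= 1 ->
  cx + cy + cz + t <= N -> False.
Proof.
move=> k_gt2 n_big adm N_le x_cover dx_lt y_cover dy_lt z_cover dz_lt.
move=> lx_le ly_le lz_le aa_le bb_le c_le.
have k_gt0 : 0 < k by lia.
have n_gt1 : 1 < n by lia.
have kc_le : k * cx + k * cy + k * cz + k * t <= k * N.
  by rewrite -!mulnDr leq_mul2l c_le orbT.
have kt_ge : 3 * t <= k * t by rewrite leq_mul2r k_gt2 orbT.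
have [[M [n_eq _ u_eq]] | [q [s [n_eq s_gt0 s_le u_eq]]]] :=
  u_bound_cases k_gt2 n_gt1 adm; rewrite u_eq in N_le.
- have M_gt3 : k * 4 <= k * M by rewrite leq_mul2l orbC -(ltn_pmul2l k_gt0); lia.
  have kN_le : k * N <= k * (2 * M - 2) by rewrite leq_mul2l N_le orbT.
  rewrite mulnBr mulnCA in kN_le.
  lia.
- have q_gt2 : 2 < q by rewrite -(ltn_pmul2l k_gt0); lia.
  have kN_le : k * N <= k * (2 * q - 1) by rewrite leq_mul2l N_le orbT.
  rewrite mulnBr mulnCA in kN_le.
  have [t_le | t_gt] := leqP t s.
  + have cx_ge : q - 1 <= cx by apply: (@leq_mul2l_addr k _ _ k.-1); rewrite ?mulnBr; lia.
    have cy_ge : q - 1 <= cy by apply: (@leq_mul2l_addr k _ _ k.-1); rewrite ?mulnBr; lia.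
    have cz_ge : q - 2 <= cz by apply: (@leq_mul2l_addr k _ _ 0); rewrite ?mulnBr; lia.
    have cz_ge0 : t = 0 -> q - 1 <= cz.
      by move=> t0; apply: (@leq_mul2l_addr k _ _ k.-1); rewrite ?mulnBr; lia.
    lia.
  + have [e t_eq] : exists e, t = s.+1 + e by exists (t - s.+1); lia.
    have ke_ge : 3 * e <= k * e by rewrite leq_mul2r k_gt2 orbT.
    have kq_ge : k * 3 <= k * q by rewrite leq_mul2l q_gt2 orbT.
    have ks_ge : k <= k * s by rewrite -{1}(muln1 k) leq_mul2l s_gt0 orbT.
    rewrite t_eq !mulnDr mulnS in kc_le.
    lia.
Qed.

Section Stars.
Variables (T : finType) (A : {set T * {set T}}).
Implicit Types (c v w x y : T) (X : {set T}).

Definition centre_stars c := [set s in A | s.1 == c].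
Definition leaf_stars v := [set s in A | v \in s.2].
Definition outer_stars X := [set s in A | s.1 \notin X].

Lemma coveredE x y : covered A x y =
  [exists s in A, (s.1 == x) && (y \in s.2) || (s.1 == y) && (x \in s.2)].
Proof.
apply/existsP/existsP => -[s /andP[sA s_xy]]; exists s; rewrite sA /=.
- case/imsetP: s_xy => z zs /set2_eq[[-> ->]|[-> ->]]; by rewrite eqxx zs ?orbT.
- apply/imsetP; case/orP: s_xy => /andP[/eqP <- zs]; [exists y | exists x] => //.
  by rewrite setUC.
Qed.

Lemma leftover_cover k v : (forall s, s \in A -> #|s.2| <= k) ->
  #|T| <= 1 + leftover_deg A v + (k * #|centre_stars v| + #|leaf_stars v|).
Proof.
move=> leaves_le.
have cover : [set: T] \subset ([set v] :|: [set y | leftover_adj A v y]) :|: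
    ((\bigcup_(s in centre_stars v) s.2) :|: [set s.1 | s in leaf_stars v]).
  apply/subsetP => y _; rewrite !inE.
  have [// | yv] := eqVneq y v.
  case: (boolP (covered A v y)) => [|uncov]; last by rewrite /leftover_adj eq_sym yv uncov.
  rewrite coveredE => /existsP[s /andP[sA /orP[] /andP[/eqP s1 ys]]].
  + apply/orP; right; apply/orP; left.
    by apply/bigcupP; exists s; rewrite ?inE ?sA ?s1 ?eqxx.
  + by apply/orP; right; apply/orP; right; apply/imsetP; exists s; rewrite ?inE ?sA ?s1.
rewrite -cardsT (leq_trans (subset_leq_card cover)) //.
rewrite (leq_trans (leq_card_setU _ _).1) // leq_add //.
  by rewrite (leq_trans (leq_card_setU _ _).1) // cards1.
rewrite (leq_trans (leq_card_setU _ _).1) // leq_add ?leq_imset_card //.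
rewrite (leq_trans (card_bigcup_le _ _)) // mulnC -sum_nat_const leq_sum // => s.
by rewrite inE => /andP[/leaves_le].
Qed.

Lemma card_centre_stars X : \sum_(c in X) #|centre_stars c| + #|outer_stars X| = #|A|.
Proof.
rewrite -[#|A|]sum1_card (bigID (fun s => s.1 \in X)) /=.
rewrite (partition_big (fun s => s.1) (mem X)) => [|s /andP[]//].
congr (_ + _); last by rewrite -sum1_card; apply: eq_bigl => s; rewrite inE.
apply: eq_bigr => c cX; rewrite -sum1_card; apply: eq_bigl => s.
by rewrite !inE; have [->|] := eqVneq s.1 c; rewrite ?cX ?andbT ?andbF.
Qed.

Lemma leaf_stars_le X v :
  #|leaf_stars v| <= \sum_(c in X) #|centre_stars c :&: leaf_stars v| + #|outer_stars X|.
Proof.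
have split_leaf : leaf_stars v \subset
    (\bigcup_(c in X) (centre_stars c :&: leaf_stars v)) :|: outer_stars X.
  apply/subsetP => s; rewrite inE => /andP[sA vs].
  rewrite !inE sA /=; case: (boolP (s.1 \in X)) => [s1X|]; last by rewrite orbT.
  by apply/orP; left; apply/bigcupP; exists s.1; rewrite // !inE sA eqxx vs.
rewrite (leq_trans (subset_leq_card split_leaf)) // (leq_trans (leq_card_setU _ _).1) //.
by rewrite leq_add2r card_bigcup_le.
Qed.

Lemma centre_leaf_stars0 c : (forall s, s \in A -> s.1 \notin s.2) ->
  centre_stars c :&: leaf_stars c = set0.
Proof.
move=> centre_notin; apply/setP => s; rewrite !inE.
by case: (boolP (s \in A)) => //= /centre_notin; case: eqP => // ->; case: (c \in s.2).
Qed.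

Lemma leftover_adjC x y : leftover_adj A x y = leftover_adj A y x.
Proof. by rewrite /leftover_adj /covered setUC eq_sym. Qed.

Lemma leftover_adj_stars0 x y :
  leftover_adj A x y -> centre_stars y :&: leaf_stars x = set0.
Proof.
case/andP=> _; rewrite coveredE => uncov; apply/setP => s; rewrite !inE.
apply/negP => /andP[/andP[sA /eqP s1] /andP[_ xs]]; case/negP: uncov.
by apply/existsP; exists s; rewrite sA s1 eqxx xs orbT.
Qed.

Lemma edge_stars_le1 v w :
  (forall s t, s \in A -> t \in A -> s != t -> [disjoint star_edges s & star_edges t]) ->
  v != w -> #|centre_stars w :&: leaf_stars v| + #|centre_stars v :&: leaf_stars w| <= 1.
Proof.
move=> disj vw.
set E := [set s in A | [set v; w] \in star_edges s].
have edge_le1 : #|E| <= 1.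
  apply/card_le1_eqP => s t; rewrite !inE => /andP[sA s_vw] /andP[tA t_vw].
  have [// | st] := eqVneq s t.
  have := disj _ _ sA tA st; rewrite disjoints_subset => /subsetP/(_ _ s_vw).
  by rewrite inE t_vw.
have no_common :
    (centre_stars w :&: leaf_stars v) :&: (centre_stars v :&: leaf_stars w) = set0.
  apply/setP => s; rewrite !inE.
  apply/negP => /andP[/andP[/andP[_ /eqP sw] _] /andP[/andP[_ sv] _]].
  by move: vw; rewrite -sw eq_sym sv.
rewrite -cardsUI no_common cards0 addn0 (leq_trans _ edge_le1) // subset_leq_card //.
apply/subsetP => s; rewrite !inE => /orP[] /andP[/andP[sA /eqP s1] /andP[_ xs]];
  rewrite sA /=; apply/imsetP.
- by exists v => //; rewrite s1 setUC.
- by exists w => //; rewrite s1.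
Qed.

Lemma centre_not_leaf c : 0 < #|centre_stars c| -> #|leaf_stars c| = 0 ->
  (exists2 s, s \in A & s.1 = c) /\ (forall s, s \in A -> c \notin s.2).
Proof.
case/card_gt0P=> s; rewrite inE => /andP[sA /eqP s1] /eqP; rewrite cards_eq0 => /eqP leaf0.
split; first by exists s.
move=> t tA; apply/negP => ct.
have : t \in leaf_stars c by rewrite inE tA ct.
by rewrite leaf0 inE.
Qed.
End Stars.

Section LowDegreeVertices.
Variables (T : finType) (k : nat) (A : {set T * {set T}}).
Hypotheses (k_gt2 : 2 < k) (T_big : 3 * k + 1 < #|T|) (adm : k_admissible #|T| k).
Hypotheses (design : partial_star_design k A) (A_le : #|A| <= u_bound #|T| k).

Lemma two_low_vertices_reducible v w :
  v != w -> leftover_deg A v <= k -> leftover_deg A w <= k -> reducible k A.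
Proof.
move=> vw dv dw; have [kstar disj] := design.
have leaves_le s : s \in A -> #|s.2| <= k by case/kstar=> _ ->.
have centre_notin s : s \in A -> s.1 \notin s.2 by case/kstar.
set X := [set v; w].
have centres := card_centre_stars A X; rewrite sum_set2 // in centres.
have leaf_v := leaf_stars_le A X v.
rewrite sum_set2 // centre_leaf_stars0 // cards0 add0n in leaf_v.
have leaf_w := leaf_stars_le A X w.
rewrite sum_set2 // centre_leaf_stars0 // cards0 addn0 in leaf_w.
have edge_le1 := edge_stars_le1 disj vw.
have [T_mod A_eq t0 cv cw] := count_two_low_vertices k_gt2 T_big adm A_le
  (leftover_cover v leaves_le) dv (leftover_cover w leaves_le) dw
  leaf_v leaf_w edge_le1 (eq_leq centres).
do 2!split => //.
have [a0 | b0] : #|centre_stars A w :&: leaf_stars A v| = 0 \/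
                 #|centre_stars A v :&: leaf_stars A w| = 0 by lia.
- by exists v; apply: centre_not_leaf => //; lia.
- by exists w; apply: centre_not_leaf => //; lia.
Qed.

Lemma no_three_low_vertices x y z : leftover_adj A x y -> z != x -> z != y ->
  leftover_deg A x < 2 * k -> leftover_deg A y < 2 * k -> leftover_deg A z < 2 * k ->
  False.
Proof.
move=> xy zx zy dx dy dz; have [kstar disj] := design.
have leaves_le s : s \in A -> #|s.2| <= k by case/kstar=> _ ->.
have centre_notin s : s \in A -> s.1 \notin s.2 by case/kstar.
have x_neq_y : x != y by case/andP: xy.
have yx : leftover_adj A y x by rewrite leftover_adjC.
have xz : x != z by rewrite eq_sym.
have yz : y != z by rewrite eq_sym.
set X := [set x; y; z].
have centres := card_centre_stars A X; rewrite sum_set3 // in centres.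
have leaf_x := leaf_stars_le A X x.
rewrite sum_set3 // centre_leaf_stars0 // (leftover_adj_stars0 xy) !cards0 !add0n in leaf_x.
have leaf_y := leaf_stars_le A X y.
rewrite sum_set3 // centre_leaf_stars0 // (leftover_adj_stars0 yx) !cards0 !add0n in leaf_y.
have leaf_z := leaf_stars_le A X z.
rewrite sum_set3 // centre_leaf_stars0 // cards0 addn0 in leaf_z.
exact: (count_three_low_vertices k_gt2 T_big adm A_le
  (leftover_cover x leaves_le) dx (leftover_cover y leaves_le) dy
  (leftover_cover z leaves_le) dz leaf_x leaf_y leaf_z
  (edge_stars_le1 disj xz) (edge_stars_le1 disj yz) (eq_leq centres)).
Qed.

End LowDegreeVertices.

Theorem lemma12 (T : finType) (k : nat) (A : {set T * {set T}}) :
  3 <= k -> 3 * k + 1 < #|T| -> k_admissible #|T| k ->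
  partial_star_design k A -> ~ reducible k A ->
  #|A| <= u_bound #|T| k ->
  (forall v w : T, leftover_deg A v <= k -> leftover_deg A w <= k -> v = w) /\
  (forall x y : T, leftover_adj A x y ->
     leftover_deg A x < 2 * k -> leftover_deg A y < 2 * k ->
     forall z : T, z != x -> z != y -> 2 * k <= leftover_deg A z).
Proof.
move=> k_gt2 T_big adm design not_reducible A_le; split.
- move=> v w dv dw; have [// | vw] := eqVneq v w.
  by case: not_reducible; apply: two_low_vertices_reducible vw dv dw.
- move=> x y xy dx dy z zx zy; rewrite leqNgt; apply/negP => dz.
  exact: (no_three_low_vertices k_gt2 T_big adm design A_le xy zx zy dx dy dz).
Qed.
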